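(* For every positive integer $n$, $$\sum_{\mathbf a\in\mathsf{PF}_n} t^{z(\mathbf a)}=\sum_{\mathbf a\in\mathsf{PF}_n} t^{\operatorname{run}(\mathbf a)}.$$
   Context: Let $[n]=\{1,\dots,n\}$. $\mathsf{PF}_n$ is the set of $\mathbf a=(a_1,\dots,a_n)\in[n]^n$ with $|\{j:a_j\le i\}|\ge i$ for every $i\in[n]$ (parking functions). For $\mathbf a\in[n]^n$, the center $Z(\mathbf a)$ is the largest subset $X=\{x_1<\dots<x_\ell\}\subseteq[n]$ with $a_{x_i}\le i$ for all $i\in[\ell]$, and $z(\mathbf a)=|Z(\mathbf a)|$. If $1\in\{a_1,\dots,a_n\}$, $\operatorname{run}(\mathbf a)=\max\{i\in[n]:[i]\subseteq\{a_1,\dots,a_n\}\}$; otherwise $\operatorname{run}(\mathbf a)=0$. *)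

From mathcomp Require Import all_boot all_order all_algebra.
Set Implicit Arguments. Unset Strict Implicit. Unset Printing Implicit Defensive.

(* Convention: an element a of [n]^n is a finite function 'I_n -> 'I_n;
   position j : 'I_n stands for j+1 and value a j stands for (a j)+1. *)

Definition is_pf (n : nat) (a : {ffun 'I_n -> 'I_n}) : bool :=
  [forall i : 'I_n, i.+1 <= #|[set j | (a j <= i)%N]|].

(* X = {x_1 < ... < x_l} satisfies a_{x_i} <= i for all i,
   i.e. each x in X has value at most its rank in X *)
Definition center_ok (n : nat) (a : {ffun 'I_n -> 'I_n}) (X : {set 'I_n}) : bool :=
  [forall x in X, (a x).+1 <= #|[set y in X | (y <= x)%N]|].

Definition zstat (n : nat) (a : {ffun 'I_n -> 'I_n}) : nat :=
  \max_(X : {set 'I_n} | center_ok a X) #|X|.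

Definition runstat (n : nat) (a : {ffun 'I_n -> 'I_n}) : nat :=
  \max_(i < n.+1 | [forall k : 'I_n, (k < i)%N ==> [exists j, a j == k]]) i.

From mathcomp Require Import all_boot all_order all_algebra.
From mathcomp Require Import zify.
Set Implicit Arguments. Unset Strict Implicit. Unset Printing Implicit Defensive.
Import GRing.Theory.

(* The center size z(a) is
   computed greedily from left to right: position j joins the center whenever
   a_j does not exceed the current size.  run(a) >= k says that 0, ..., k-1 all
   occur, and being a parking function only depends on the counts
   #{j | a_j <= s} truncated at s + 1.  Summing over words and peeling off the
   last letter a <= k: the greedy value of w a is >= k + 1 iff that of w is >= k,
   while w a has run >= k + 1 iff w, with the letters a and k exchanged, has run
   >= k; the exchange preserves the truncated counts.  Induction on the length
   gives #{a parking : z(a) >= k} = #{a parking : run(a) >= k} for every k, and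
   the generating polynomials agree by telescoping. *)

Lemma card_set_sum (T : finType) (P b : pred T) :
  #|[set x | P x & b x]| = \sum_(x | P x) b x.
Proof. by rewrite -sum1dep_card big_mkcondr /=; apply: eq_bigr => x _; case: (b x). Qed.

Lemma all_iota_forall n (P : pred nat) : all P (iota 0 n) = [forall j : 'I_n, P j].
Proof.
apply/allP/forallP => [allP j | allP i]; first by apply: allP; rewrite mem_iota /=.
by rewrite mem_iota /= => lin; apply: (allP (Ordinal lin)).
Qed.

Section Telescoping.
Local Open Scope ring_scope.

Lemma telescope_sumr_lt (V : zmodType) (h : nat -> V) (m N : nat) : (m <= N)%N ->
  \sum_(k < N) (h k.+1 - h k) *+ (k < m)%N = h m - h 0%N.
Proof.
move=> mN; under eq_bigr do rewrite mulrb.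
rewrite -big_mkcond -(big_ord_widen _ (fun k => h k.+1 - h k)) //.
by rewrite -(big_mkord xpredT (fun k => h k.+1 - h k)) telescope_sumr.
Qed.

Lemma sum_eq_of_card_gt (T : finType) (P : pred T) (f g : T -> nat) (N : nat)
    (V : zmodType) (h : nat -> V) :
  (forall x, P x -> f x <= N)%N -> (forall x, P x -> g x <= N)%N ->
  (forall k, k < N -> #|[set x | P x & k < f x]| = #|[set x | P x & k < g x]|)%N ->
  \sum_(x | P x) h (f x) = \sum_(x | P x) h (g x).
Proof.
have expand u : (forall x, P x -> u x <= N)%N -> \sum_(x | P x) h (u x) =
    \sum_(x | P x) h 0%N
    + \sum_(k < N) (h k.+1 - h k) *+ #|[set x | P x & (k < u x)%N]|.
  move=> uN; under [X in _ + X]eq_bigr => k _.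
    by rewrite (card_set_sum P (fun x => k < u x)%N) -sumrMnr; over.
  rewrite exchange_big -big_split; apply: eq_bigr => x Px /=.
  by rewrite telescope_sumr_lt ?uN // addrC subrK.
move=> fN gN fg; rewrite (expand f fN) (expand g gN); congr (_ + _).
by apply: eq_bigr => k _; rewrite fg.
Qed.

End Telescoping.

Definition greedy_center (w : seq nat) : nat := foldl (fun c a => c + (a <= c)) 0 w.

Lemma greedy_center_rcons w a :
  greedy_center (rcons w a) = greedy_center w + (a <= greedy_center w).
Proof. by rewrite /greedy_center foldl_rcons. Qed.

Lemma leq_greedy_center_rcons k w a :
  (k.+1 <= greedy_center (rcons w a)) =
  (if a <= k then k <= greedy_center w else k.+1 <= greedy_center w).
Proof.
rewrite greedy_center_rcons; set g := greedy_center w.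
by case: (leqP a k) => ak; case: (leqP a g) => ag; apply/idP/idP; lia.
Qed.

Definition has_run (k : nat) (w : seq nat) : bool := all (mem w) (iota 0 k).

Lemma has_runP k w : reflect (forall v, v < k -> v \in w) (has_run k w).
Proof.
apply: (iffP allP) => run v; first by move=> vk; apply: run; rewrite mem_iota.
by rewrite mem_iota => /andP[_]; apply: run.
Qed.

Lemma has_run_rcons_gt k w a : k <= a -> has_run k (rcons w a) = has_run k w.
Proof.
move=> ka; apply/has_runP/has_runP => run v vk.
  by have := run v vk; rewrite mem_rcons in_cons; case: eqP => // va; lia.
by rewrite mem_rcons in_cons run ?orbT.
Qed.

Definition transp (a b x : nat) : nat := if x == a then b else if x == b then a else x.

Lemma transpK a b : involutive (transp a b).
Proof. by move=> x; rewrite /transp; do 4?case: eqP => //; lia. Qed.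

Lemma mem_map_transp a b v w : (v \in map (transp a b) w) = (transp a b v \in w).
Proof. by rewrite -{1}(transpK a b v) (mem_map (can_inj (transpK a b))). Qed.

Lemma has_run_rcons_le k w a :
  a <= k -> has_run k.+1 (rcons w a) = has_run k (map (transp a k) w).
Proof.
move=> ak; apply/has_runP/has_runP => run v vk.
- rewrite mem_map_transp /transp; case: (eqVneq v a) => [va|va].
    by have := run k (ltnSn k); rewrite mem_rcons in_cons; case: eqP => //; lia.
  have -> : (v == k) = false by apply/eqP; lia.
  by have := run v (ltnW vk); rewrite mem_rcons in_cons (negPf va).
- rewrite mem_rcons in_cons; case: (eqVneq v a) => //= va.
  have := run (transp a k v); rewrite mem_map_transp transpK; apply.
  by rewrite /transp; do 2?case: eqP; lia.
Qed.

(* The counts #{j | w_j <= s}, truncated at s + 1: all that the parking condition sees. *)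
Definition same_profile (w u : seq nat) : Prop :=
  forall s, minn (count (leq^~ s) w) s.+1 = minn (count (leq^~ s) u) s.+1.

Definition profile_invariant (F : seq nat -> nat) : Prop :=
  forall w u, same_profile w u -> F w = F u.

Lemma same_profile_rcons w u a : same_profile w u -> same_profile (rcons w a) (rcons u a).
Proof.
move=> wu s; rewrite -!cats1 !count_cat /=.
by have := wu s; case: (a <= s) => /=; lia.
Qed.

Lemma profile_invariant_rcons F a :
  profile_invariant F -> profile_invariant (fun w => F (rcons w a)).
Proof. by move=> invF w u /(same_profile_rcons a) /invF. Qed.

Lemma has_run_count k w s : has_run k w -> s < k -> s < count (leq^~ s) w.
Proof.
move=> /has_runP run sk; rewrite -size_filter -(size_iota 0 s.+1).
apply: uniq_leq_size => [|v]; first exact: iota_uniq.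
rewrite mem_iota mem_filter => /andP[_ vs] /=.
by rewrite -ltnS vs run //; lia.
Qed.

Lemma same_profile_rcons_run k w a :
  has_run k w -> a <= k -> same_profile (rcons w a) (rcons w k).
Proof.
move=> run ak s; rewrite -!cats1 !count_cat /=.
case: (ltnP s k) => sk; last by rewrite (leq_trans ak sk).
by have := has_run_count run sk; case: (a <= s); case: (k <= s) => /=; lia.
Qed.

(* Below the run both counts are saturated; from [k] on, [a] and [k] are both counted. *)
Lemma same_profile_transp k w a :
  has_run k.+1 w -> a <= k -> same_profile (map (transp a k) w) w.
Proof.
move=> run ak s; case: (ltnP s k) => sk.
  have run' : has_run k.+1 (map (transp a k) w).
    apply/has_runP => v vk; rewrite mem_map_transp.
    by move/has_runP: run; apply; rewrite /transp; do 2?case: eqP; lia.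
  by have := has_run_count run (ltnW sk); have := has_run_count run' (ltnW sk); lia.
rewrite count_map; congr minn; apply: eq_count => x /=.
by rewrite /transp; do 2?case: eqP => [->|_]; lia.
Qed.

Fixpoint sum_words (m L : nat) (F : seq nat -> nat) : nat :=
  if L is L'.+1 then \sum_(a < m) sum_words m L' (fun w => F ((a : nat) :: w))
  else F [::].

Lemma eq_sum_words m L F G : F =1 G -> sum_words m L F = sum_words m L G.
Proof.
elim: L F G => [|L IH] F G FG /=; first exact: FG.
by apply: eq_bigr => a _; apply: IH => w.
Qed.

Lemma sum_words_rcons m L F :
  sum_words m L.+1 F = \sum_(a < m) sum_words m L (fun w => F (rcons w a)).
Proof.
elim: L F => [|L IH] F //.
transitivity (\sum_(b < m) sum_words m L.+1 (fun w => F ((b : nat) :: w))); first by [].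
by under eq_bigr => b _ do rewrite IH; rewrite exchange_big.
Qed.

Lemma sum_words_map m L F s : involutive s -> (forall x, x < m -> s x < m) ->
  sum_words m L (fun w => F (map s w)) = sum_words m L F.
Proof.
move=> sK sm; elim: L F => [|L IH] F //=.
under eq_bigr => a _ do rewrite (IH (fun w => F (s a :: w))).
pose so (i : 'I_m) := Ordinal (sm i (ltn_ord i)).
have so_inj : injective so by move=> i j [] /(congr1 s); rewrite !sK => /val_inj.
by rewrite [RHS](reindex_inj so_inj).
Qed.

Lemma sum_words_tuple m L G :
  \sum_(t : L.-tuple 'I_m) G (map val t) = sum_words m L G.
Proof.
elim: L G => [|L IH] G.
  by rewrite (big_pred1 [tuple]) // => t; rewrite [t]tuple0; apply/esym/eqP.
pose cons_tuple (p : 'I_m * L.-tuple 'I_m) := [tuple of p.1 :: p.2].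
have cons_bij : bijective cons_tuple.
  exists (fun t : L.+1.-tuple 'I_m => (thead t, [tuple of behead t])).
    by case=> x t; congr pair; apply: val_inj.
  by move=> t; apply: val_inj; case: t => [[|x s]].
rewrite (reindex cons_tuple) /=; last exact: onW_bij.
transitivity (\sum_(x < m) \sum_(t : L.-tuple 'I_m) G ((x : nat) :: map val t)).
  by rewrite pair_big.
by apply: eq_bigr => x _; rewrite (IH (fun w => G ((x : nat) :: w))).
Qed.

Definition word L m (f : {ffun 'I_L -> 'I_m}) : seq nat :=
  [seq val (f j) | j <- enum 'I_L].

Lemma sum_words_ffun m L G :
  \sum_(f : {ffun 'I_L -> 'I_m}) G (word f) = sum_words m L G.
Proof.
rewrite -sum_words_tuple.
pose ffun_of_tuple (t : L.-tuple 'I_m) := [ffun j => tnth t j].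
have ffun_bij : bijective ffun_of_tuple.
  exists (fun f : {ffun 'I_L -> 'I_m} => [tuple f j | j < L]).
    by move=> t; apply: eq_from_tnth => j; rewrite tnth_mktuple ffunE.
  by move=> f; apply/ffunP => j; rewrite ffunE tnth_mktuple.
rewrite (reindex ffun_of_tuple) /=; last exact: onW_bij.
apply: eq_bigr => t _; congr G.
by rewrite -[in RHS](map_tnth_enum t) -map_comp; apply: eq_map => j; rewrite /= ffunE.
Qed.

Lemma sum_transp_run m L k a F : k < m -> a <= k -> profile_invariant F ->
  sum_words m L (fun w => has_run k.+1 (rcons w a) * F (rcons w a)) =
  sum_words m L (fun w => has_run k w * F (rcons w a)).
Proof.
move=> km ak invF; under eq_sum_words => w do rewrite has_run_rcons_le //.
rewrite -(sum_words_map _ _ (transpK a k)); last first.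
  by move=> x xm; rewrite /transp; do 2?case: eqP; lia.
apply: eq_sum_words => u /=; rewrite (mapK (transpK a k)).
case run: (has_run k u); rewrite ?mul0n ?mul1n //.
have run' : has_run k.+1 (rcons u k).
  apply/has_runP => v vk; rewrite mem_rcons in_cons.
  by case: eqP => //= vk'; move/has_runP: run; apply; lia.
have -> : rcons (map (transp a k) u) a = map (transp a k) (rcons u k).
  by rewrite map_rcons /transp eqxx; case: eqP => [->|].
rewrite (invF _ _ (same_profile_rcons_run run ak)).
exact: invF (same_profile_transp run' ak).
Qed.

Lemma sum_greedy_center_run m L k F : k <= m -> profile_invariant F ->
  sum_words m L (fun w => (k <= greedy_center w) * F w) =
  sum_words m L (fun w => has_run k w * F w).
Proof.
elim: L k F => [|L IH] [|k] F km invF //.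
rewrite !sum_words_rcons; apply: eq_bigr => a _.
under eq_sum_words => w do rewrite leq_greedy_center_rcons.
have invFa := profile_invariant_rcons a invF.
case: (leqP a k) => ak.
  by rewrite IH ?sum_transp_run //; apply: ltnW.
by rewrite IH //; apply: eq_sum_words => w; rewrite has_run_rcons_gt.
Qed.

Definition mask_rank (m : seq bool) (i : nat) : nat := \sum_(j < i) nth false m j.

Definition center_mask (m : seq bool) (w : seq nat) : bool :=
  all (fun i => nth false m i ==> (nth 0 w i < mask_rank m i.+1)) (iota 0 (size w)).

Lemma mask_rank_rcons m b i : i <= size m -> mask_rank (rcons m b) i = mask_rank m i.
Proof.
by move=> im; apply: eq_bigr => j _; rewrite nth_rcons (leq_trans (ltn_ord j) im).
Qed.

Lemma mask_rank_rcons_size m b :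
  mask_rank (rcons m b) (size m).+1 = mask_rank m (size m) + b.
Proof.
rewrite /mask_rank big_ord_recr /= nth_rcons ltnn eqxx.
by congr (_ + _); apply: eq_bigr => j _; rewrite nth_rcons ltn_ord.
Qed.

Lemma center_mask_rcons m w b a : size m = size w ->
  center_mask (rcons m b) (rcons w a) =
  center_mask m w && (b ==> (a <= mask_rank m (size m))).
Proof.
move=> smw; rewrite /center_mask size_rcons -addn1 iotaD all_cat /= andbT add0n.
congr andb.
  apply: eq_in_all => i; rewrite mem_iota add0n => /andP[_ iw].
  by rewrite !nth_rcons smw iw mask_rank_rcons // smw.
by rewrite !nth_rcons -smw ltnn eqxx mask_rank_rcons_size; case: b; rewrite /= ?addn1.
Qed.

Lemma mask_rank_le_greedy m w : size m = size w -> center_mask m w ->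
  mask_rank m (size m) <= greedy_center w.
Proof.
elim/last_ind: w m => [|w a IH] m0.
  by move/size0nil ->; rewrite /mask_rank big_ord0.
case/lastP: m0 => [|m b]; first by rewrite size_rcons.
rewrite !size_rcons => -[smw]; rewrite center_mask_rcons // => /andP[cm ab].
rewrite mask_rank_rcons_size greedy_center_rcons.
have := IH m smw cm; set r := mask_rank m _; set g := greedy_center w.
by case: b ab => //= ar; case: (leqP a g) => ag; lia.
Qed.

Lemma greedy_center_mask w : exists2 m, size m = size w &
  center_mask m w && (mask_rank m (size m) == greedy_center w).
Proof.
elim/last_ind: w => [|w a [m smw /andP[cm /eqP rg]]].
  by exists [::]; rewrite // /mask_rank big_ord0.
exists (rcons m (a <= greedy_center w)); first by rewrite !size_rcons smw.
rewrite center_mask_rcons // cm size_rcons mask_rank_rcons_size greedy_center_rcons rg.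
by rewrite implybb eqxx.
Qed.

Definition parking n (w : seq nat) : bool :=
  all (fun i => i < count (leq^~ i) w) (iota 0 n).

Lemma profile_invariant_parking n : profile_invariant (parking n).
Proof.
move=> w u wu; rewrite /parking (@eq_all _ _ (fun i => i < count (leq^~ i) u)) // => i.
by have := wu i; rewrite /=; lia.
Qed.

Section ParkingFunctions.
Variable n : nat.
Implicit Type a : {ffun 'I_n -> 'I_n}.

Definition set_mask (X : {set 'I_n}) : seq bool := [seq j \in X | j <- enum 'I_n].

Lemma size_word a : size (word a) = n.
Proof. by rewrite size_map size_enum_ord. Qed.

Lemma size_set_mask X : size (set_mask X) = n.
Proof. by rewrite size_map size_enum_ord. Qed.

Lemma nth_word a (j : 'I_n) : nth 0 (word a) j = a j.
Proof. by rewrite (nth_map j) ?size_enum_ord // nth_ord_enum. Qed.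

Lemma nth_set_mask X (j : 'I_n) : nth false (set_mask X) j = (j \in X).
Proof. by rewrite (nth_map j) ?size_enum_ord // nth_ord_enum. Qed.

Lemma mask_rank_set_mask X i :
  i <= n -> mask_rank (set_mask X) i = #|[set y in X | y < i]|.
Proof.
move=> iN; rewrite /mask_rank.
rewrite (big_ord_widen _ (fun j => nat_of_bool (nth false (set_mask X) j)) iN).
rewrite -sum1dep_card big_mkcond [RHS]big_mkcond /=.
by apply: eq_bigr => j _; rewrite nth_set_mask; case: (j \in X); case: (j < i).
Qed.

Lemma center_mask_set_mask a X : center_mask (set_mask X) (word a) = center_ok a X.
Proof.
rewrite /center_mask size_word all_iota_forall.
by apply: eq_forallb => j; rewrite nth_set_mask nth_word mask_rank_set_mask.
Qed.

Lemma zstat_greedy a : zstat a = greedy_center (word a).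
Proof.
apply/eqP; rewrite eqn_leq; apply/andP; split.
  apply/bigmax_leqP => X centerX.
  have := mask_rank_le_greedy (etrans (size_set_mask X) (esym (size_word a))).
  rewrite center_mask_set_mask size_set_mask mask_rank_set_mask // => /(_ centerX).
  apply: leq_trans; apply: subset_leq_card.
  by apply/subsetP => x xX; rewrite inE xX ltn_ord.
case: (greedy_center_mask (word a)) => m; rewrite size_word => smn /andP[cm /eqP <-].
pose X := [set j : 'I_n | nth false m j].
have mE : set_mask X = m.
  apply: (@eq_from_nth _ false); rewrite size_set_mask // => i iN.
  by rewrite (nth_set_mask _ (Ordinal iN)) inE.
apply: (bigmax_sup X); first by rewrite -center_mask_set_mask mE.
rewrite -mE mask_rank_set_mask ?size_set_mask //.
by apply: subset_leq_card; apply/subsetP => x; rewrite inE => /andP[].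
Qed.

Lemma has_run_word a k : k <= n ->
  has_run k (word a) = [forall j : 'I_n, (j < k) ==> [exists i, a i == j]].
Proof.
move=> kn; apply/has_runP/forallP => [run j | run v vk].
  apply/implyP => /run /mapP[i _ ji]; apply/existsP; exists i.
  by apply/eqP/val_inj.
have vn : v < n by apply: leq_trans vk kn.
have /existsP[i /eqP ai] := implyP (run (Ordinal vn)) vk.
by apply/mapP; exists i; rewrite ?mem_enum ?ai.
Qed.

Lemma leq_runstat a k : k <= n -> (k <= runstat a) = has_run k (word a).
Proof.
move=> kn; apply/idP/idP => [|runk]; last first.
  by apply: (bigmax_sup (Ordinal (kn : k < n.+1))) => //; rewrite -has_run_word.
case: k kn => // k kn; apply: contraLR => not_runk.
rewrite -ltnNge ltnS; apply/bigmax_leqP => i.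
rewrite -has_run_word; last by rewrite -ltnS.
move=> runi; rewrite leqNgt; apply: contra not_runk => ki.
by apply/has_runP => v vk; move/has_runP: runi; apply; apply: leq_trans ki.
Qed.

Lemma is_pf_parking a : is_pf a = parking n (word a).
Proof.
rewrite /parking all_iota_forall; apply: eq_forallb => i.
rewrite count_map cardsE cardE /enum_mem size_filter count_filter.
by congr (_ < _); apply: eq_count => j; rewrite /= !inE andbT.
Qed.

Lemma zstat_le a : zstat a <= n.
Proof. by apply/bigmax_leqP => X _; rewrite -[leqRHS]card_ord max_card. Qed.

Lemma runstat_le a : runstat a <= n.
Proof. by apply/bigmax_leqP => i _; rewrite -ltnS. Qed.

Lemma card_zstat_runstat k : k <= n ->
  #|[set a : {ffun 'I_n -> 'I_n} | is_pf a & k <= zstat a]| =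
  #|[set a : {ffun 'I_n -> 'I_n} | is_pf a & k <= runstat a]|.
Proof.
move=> kn; rewrite !card_set_sum [LHS]big_mkcond [RHS]big_mkcond.
have restrict (b : nat) a : (if is_pf a then b else 0) = b * parking n (word a).
  by rewrite is_pf_parking; case: (parking _ _); rewrite ?muln1 ?muln0.
under eq_bigr => a _ do rewrite restrict zstat_greedy.
under [RHS]eq_bigr => a _ do rewrite restrict leq_runstat //.
rewrite (@sum_words_ffun n n (fun w => (k <= greedy_center w) * parking n w)).
rewrite (@sum_words_ffun n n (fun w => has_run k w * parking n w)).
exact: (sum_greedy_center_run _ kn (profile_invariant_parking n)).
Qed.

End ParkingFunctions.

Unset Implicit Arguments.
Local Open Scope ring_scope.

Theorem theorem3p5 (n : nat) (hn : (0 < n)%N) :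
  \sum_(a : {ffun 'I_n -> 'I_n} | is_pf a) ('X ^+ zstat a : {poly int}) =
  \sum_(a : {ffun 'I_n -> 'I_n} | is_pf a) ('X ^+ runstat a : {poly int}).
Proof.
apply: (sum_eq_of_card_gt (N := n)) => [a _ | a _ | k kn].
- exact: zstat_le.
- exact: runstat_le.
- exact: card_zstat_runstat.
Qed.
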